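(* Let $G=(V,E,w)$ be a finite unweighted symmetric graph, i.e. $V$ is a finite set, $w:V\times V\to\{0,1\}$ with $w(i,j)=w(j,i)$, $E=\{(i,j): w(i,j)\neq 0\}$, and $N(i)=\{j\in V: (i,j)\in E\}$. Let $V_0\subseteq V$ be a set of boundary nodes, and let the potential function be constant, $\rho(i)=1$ for all $i\in V$. Suppose $f:V\to\mathbb{R}$ satisfies the generalized geodesic distance equation with the supremum norm ($p=\infty$): $$\rho(i)\,\|(\nabla^-_w f)(i)\|_\infty = 1 \quad \text{for } i\in V\setminus V_0,\qquad f(i)=0 \quad \text{for } i\in V_0.$$ Then $f$ satisfies the shortest-path (Dijkstra) distance equation $$f(i)=\min_{j\in N(i)}\{f(j)+1\}\quad \text{for } i\in V\setminus V_0,\qquad f(i)=0\quad\text{for } i\in V_0.$$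
   Context: For $a\in\mathbb{R}$, $(a)_+=\max\{a,0\}$ and $(a)_-=-\min\{a,0\}$. The negative directional graph difference operator is $(d^-_w f)(i,j)=\sqrt{w(i,j)}\,(f(j)-f(i))_-$ for $i,j\in V$, and the negative graph gradient at $i$ is the vector $(\nabla^-_w f)(i)=[(d^-_w f)(i,j): j\in V]^T$. Its supremum norm is $\|(\nabla^-_w f)(i)\|_\infty=\max_{j\in V}|(d^-_w f)(i,j)|$. *)

From mathcomp Require Import all_boot all_order all_algebra.
Set Implicit Arguments. Unset Strict Implicit. Unset Printing Implicit Defensive.
Import Order.TTheory GRing.Theory Num.Theory.
Local Open Scope ring_scope.

Section Defs.
Variables (R : rcfType) (V : finType).

Definition negpart (a : R) : R := - Num.min a 0.

Definition dneg (w : V -> V -> R) (f : V -> R) (i j : V) : R :=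
  Num.sqrt (w i j) * negpart (f j - f i).

(* || (nabla^-_w f)(i) ||_oo = max_{j in V} |(d^-_w f)(i,j)|
   (V is nonempty whenever i : V exists; the norms are >= 0, so the
   default 0 of the big max is harmless) *)
Definition gradneg_supnorm (w : V -> V -> R) (f : V -> R) (i : V) : R :=
  \big[Num.max/0]_(j : V) `|dneg w f i j|.

Definition nbhd (w : V -> V -> R) (i : V) : {set V} := [set j | w i j != 0].

Definition is_min_over (S : {set V}) (g : V -> R) (x : R) : Prop :=
  (exists2 j, j \in S & x = g j) /\ (forall j, j \in S -> x <= g j).

End Defs.

(* On an unweighted graph the negative slope of f from i towards j is
   (f(i) - f(j))_+ for a neighbour j and 0 otherwise.  A sup-norm equal to 1
   thus says that f(i) - f(j) <= 1 for every neighbour j, with equality at a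
   neighbour where the maximum is attained: f(i) = min_{j in N(i)} (f(j) + 1). *)
From mathcomp Require Import all_boot all_order all_algebra.
Set Implicit Arguments. Unset Strict Implicit. Unset Printing Implicit Defensive.
Import Order.TTheory GRing.Theory Num.Theory.
Local Open Scope ring_scope.

Section NegativeGradient.
Variables (R : rcfType) (V : finType) (w : V -> V -> R) (f : V -> R).

Lemma negpartE (a : R) : negpart a = Num.max (- a) 0.
Proof. by rewrite /negpart oppr_min oppr0. Qed.

Lemma negpart_ge0 (a : R) : 0 <= negpart a.
Proof. by rewrite negpartE le_max lexx orbT. Qed.

Lemma dneg_ge0 i j : 0 <= dneg w f i j.
Proof. by rewrite mulr_ge0 ?sqrtr_ge0 ?negpart_ge0. Qed.

Lemma dneg_le_gradneg_supnorm i j : dneg w f i j <= gradneg_supnorm w f i.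
Proof. by rewrite -[leLHS]ger0_norm ?dneg_ge0 //; apply: le_bigmax. Qed.

Lemma gradneg_supnorm_attained i : exists j, gradneg_supnorm w f i = dneg w f i j.
Proof.
rewrite /gradneg_supnorm.
have [j _ ->] := @eq_bigmax _ _ _ 0 i predT (fun j => `|dneg w f i j|) isT
  (fun j _ => normr_ge0 _).
by exists j; rewrite ger0_norm ?dneg_ge0.
Qed.

Hypothesis w01 : forall i j, w i j = 0 \/ w i j = 1.

Lemma dneg_nbhd i j : j \in nbhd w i -> dneg w f i j = Num.max (f i - f j) 0.
Proof.
rewrite inE /dneg; case: (w01 i j) => ->; first by rewrite eqxx.
by rewrite sqrtr1 mul1r negpartE opprB.
Qed.

Lemma dneg_notin_nbhd i j : j \notin nbhd w i -> dneg w f i j = 0.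
Proof. by rewrite inE negbK /dneg => /eqP ->; rewrite sqrtr0 mul0r. Qed.

Lemma gradneg_supnorm1_is_min_over i :
  gradneg_supnorm w f i = 1 -> is_min_over (nbhd w i) (fun j => f j + 1) (f i).
Proof.
move=> sup1; split.
- have [j supj] := gradneg_supnorm_attained i.
  have j_nbhd : j \in nbhd w i.
    apply: contraT => /dneg_notin_nbhd dj0.
    by move: (@oner_neq0 R); rewrite -sup1 supj dj0 eqxx.
  exists j => //; move: supj; rewrite sup1 dneg_nbhd //.
  case: (leP (f i - f j) 0) => [_|_ /esym fij1]; first by move/eqP; rewrite oner_eq0.
  by rewrite -fij1 addrC subrK.
- move=> j j_nbhd; rewrite -lerBlDl -sup1.
  by apply: le_trans (dneg_le_gradneg_supnorm i j); rewrite dneg_nbhd // le_max lexx.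
Qed.

End NegativeGradient.

Theorem proposition1 (R : rcfType) (V : finType) (w : V -> V -> R)
    (V0 : {set V}) (rho f : V -> R)
    (w01 : forall i j, w i j = 0 \/ w i j = 1)
    (wsym : forall i j, w i j = w j i)
    (rho1 : forall i, rho i = 1)
    (Heik : forall i, i \notin V0 -> rho i * gradneg_supnorm w f i = 1)
    (Hbd : forall i, i \in V0 -> f i = 0) :
  (forall i, i \notin V0 -> is_min_over (nbhd w i) (fun j => f j + 1) (f i)) /\
  (forall i, i \in V0 -> f i = 0).
Proof.
split=> // i iNV0; apply: gradneg_supnorm1_is_min_over => //.
by rewrite -(Heik i iNV0) rho1 mul1r.
Qed.
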